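(* For a digraph $X$ the following are equivalent: (a) every eigenvalue of $H(X)$ lies in $(-\sqrt{2},\sqrt{2})$; (b) every eigenvalue of $H(X)$ lies in $[-1,1]$; (c) every weakly connected component of $X$ is a single arc, a digon, or an isolated vertex.
   Context: A digraph $X$ has a finite vertex set and an arc set of ordered pairs of distinct vertices; $\{x,y\}$ is a digon if both $xy,yx$ are arcs. The underlying graph $\Gamma(X)$ is the simple graph with an edge $\{x,y\}$ whenever $xy$ or $yx$ is an arc; weakly connected components of $X$ are the sub-digraphs induced on components of $\Gamma(X)$. The Hermitian adjacency matrix $H(X)$ has $(u,v)$-entry $1$ if $uv$ and $vu$ are arcs, $i$ if only $uv$ is an arc, $-i$ if only $vu$ is an arc, and $0$ otherwise. *)

From HB Require Import structures.
From mathcomp Require Import all_boot all_order all_algebra all_field.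
Set Implicit Arguments. Unset Strict Implicit. Unset Printing Implicit Defensive.
Import Order.TTheory GRing.Theory Num.Theory.
Local Open Scope ring_scope.

Definition digraph n (arc : rel 'I_n) : Prop := irreflexive arc.

Definition hermAdj n (arc : rel 'I_n) : 'M[algC]_n :=
  \matrix_(u, v)
    (if arc u v && arc v u then 1
     else if arc u v then 'i
     else if arc v u then - 'i
     else 0).

Definition undl n (arc : rel 'I_n) : rel 'I_n := fun x y => arc x y || arc y x.

Definition wcomp n (arc : rel 'I_n) (x : 'I_n) : {set 'I_n} :=
  [set y | connect (undl arc) x y].

Definition isolated_vertex n (C : {set 'I_n}) : Prop := exists u, C = [set u].
Definition single_arc n (arc : rel 'I_n) (C : {set 'I_n}) : Prop :=
  exists u v, [/\ u != v, C = [set u; v], arc u v & ~~ arc v u].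
Definition digon n (arc : rel 'I_n) (C : {set 'I_n}) : Prop :=
  exists u v, [/\ u != v, C = [set u; v], arc u v & arc v u].

From HB Require Import structures.
From mathcomp Require Import all_boot all_order all_algebra all_field.
From mathcomp Require Import ring.
Set Implicit Arguments. Unset Strict Implicit. Unset Printing Implicit Defensive.
Import Order.TTheory GRing.Theory Num.Theory.
Local Open Scope ring_scope.
Local Open Scope sesquilinear_scope.

(* The diagonal entry (H^2)_yy is the degree of y in the underlying graph, and,
   H being Hermitian, it is a convex combination of the squared eigenvalues of H.
   So eigenvalues in (-sqrt 2, sqrt 2) force every degree to be at most 1, i.e.
   every weak component has at most two vertices.  Conversely, when all degrees
   are at most 1, H^2 is diagonal with 0/1 entries and H^3 = H, so every
   eigenvalue satisfies a^3 = a and lies in {-1, 0, 1}. *)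

Section NormalMatrix.
Variables (C : numClosedFieldType) (n : nat) (M : 'M[C]_n).
Hypothesis M_normal : M \is normalmx.
Local Notation P := (spectralmx M).
Local Notation d := (spectral_diag M).

Lemma spectral_decomposition : M = P^t* *m diag_mx d *m P.
Proof.
by rewrite -invmx_unitary ?spectral_unitarymx //; apply/orthomx_spectralP.
Qed.

Lemma spectral_diag_eigenvalue i : eigenvalue M (d 0 i).
Proof.
have P_unitary := spectral_unitarymx M.
apply/eigenvalueP; exists (row i P).
  have PM : P *m M = diag_mx d *m P.
    rewrite [M in P *m M]spectral_decomposition !mulmxA.
    by rewrite (unitarymxP P_unitary) mul1mx.
  by rewrite -row_mul PM row_mul row_diag_mx -scalemxAl -rowE.
apply/eqP => /(congr1 (fun v => (v *m P^t*) 0 i)).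
by rewrite -row_mul (unitarymxP P_unitary) mul0mx !mxE eqxx => /eqP; rewrite oner_eq0.
Qed.

Lemma spectral_weight_sum y : \sum_i `|P i y| ^+ 2 = 1.
Proof.
have /matrixP/(_ y y) := mulmxKtV (1%:M : 'M[C]_n) (spectral_unitarymx M) erefl.
rewrite mul1mx !mxE eqxx mulr1n => <-.
by apply: eq_bigr => i _; rewrite normCKC !mxE.
Qed.

Lemma normalmx_sqr_diagE y :
  (M *m M) y y = \sum_i `|P i y| ^+ 2 * d 0 i ^+ 2.
Proof.
have PPt : P *m P^t* = 1%:M by apply/unitarymxP/spectral_unitarymx.
have -> : M *m M = P^t* *m (diag_mx d *m diag_mx d) *m P.
  rewrite [M in M *m _]spectral_decomposition [M in _ *m M]spectral_decomposition.
  rewrite !mulmxA; congr (_ *m _).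
  by rewrite -[_ *m P *m P^t*]mulmxA PPt mulmx1.
rewrite mxE; apply: eq_bigr => i _.
rewrite mulmxA !mul_mx_diag normCKC !mxE; ring.
Qed.

Lemma normalmx_sqr_diag_lt (c : C) y :
  (forall a, eigenvalue M a -> a ^+ 2 < c) -> (M *m M) y y < c.
Proof.
move=> eig_lt; rewrite normalmx_sqr_diagE -subr_gt0.
have -> : c - \sum_i `|P i y| ^+ 2 * d 0 i ^+ 2
        = \sum_i `|P i y| ^+ 2 * (c - d 0 i ^+ 2).
  rewrite -[c in c - _]mulr1 -(spectral_weight_sum y) mulr_sumr -sumrB.
  by apply: eq_bigr => i _; ring.
have [i Piy] : exists i, P i y != 0.
  apply/existsP; apply: contraT; rewrite negb_exists => /forallP P0.
  move/eqP: (spectral_weight_sum y); rewrite big1 ?(eq_sym 0) ?oner_eq0 // => i _.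
  by rewrite (eqP (negPn (P0 i))) normr0 expr0n.
have gap j : 0 < c - d 0 j ^+ 2 by rewrite subr_gt0 eig_lt ?spectral_diag_eigenvalue.
rewrite (bigD1 i) //= ltr_wpDr //.
  by apply: sumr_ge0 => j _; rewrite mulr_ge0 ?exprn_ge0 // ltW.
by rewrite mulr_gt0 ?exprn_gt0 ?normr_gt0.
Qed.

End NormalMatrix.

Lemma sqr_lt_of_sqrtC_bounds (C : numClosedFieldType) (c a : C) :
  (- sqrtC c < a) && (a < sqrtC c) -> a ^+ 2 < c.
Proof.
case/andP => lo hi; rewrite -subr_gt0.
have -> : c - a ^+ 2 = (sqrtC c - a) * (a - - sqrtC c).
  by rewrite -{1}(sqrtCK c); ring.
by rewrite mulr_gt0 ?subr_gt0.
Qed.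

Lemma unit_interval_sqrtC2 (C : numClosedFieldType) (a : C) :
  (-1 <= a) && (a <= 1) -> (- sqrtC 2%:R < a) && (a < sqrtC 2%:R).
Proof.
have sqrt2_gt1 : 1 < sqrtC 2%:R :> C.
  by rewrite -{1}sqrtC1 ltr_sqrtC ?nnegrE ?ler01 ?ler0n // ltr1n.
case/andP => lo hi; apply/andP; split; last exact: le_lt_trans hi sqrt2_gt1.
by apply: lt_le_trans lo; rewrite ltrN2.
Qed.

Lemma eigenvalue_cube_id (F : fieldType) n (M : 'M[F]_n) a :
  M *m M *m M = M -> eigenvalue M a -> a ^+ 3 = a.
Proof.
move=> M3 /eigenvalueP [v Mv v_neq0].
have : (a ^+ 3) *: v = a *: v.
  by rewrite -[in RHS]Mv -M3 !mulmxA !(Mv, =^~ scalemxAl, scalerA) -!expr2 -exprSr.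
move/eqP; rewrite -subr_eq0 -scalerBl scaler_eq0 (negbTE v_neq0) orbF.
by rewrite subr_eq0 => /eqP.
Qed.

Lemma cube_id_bounds (R : numDomainType) (a : R) :
  a ^+ 3 = a -> (-1 <= a) && (a <= 1).
Proof.
move/eqP; rewrite -subr_eq0.
have -> : a ^+ 3 - a = a * (a - 1) * (a + 1) by ring.
have le_N11 : -1 <= 1 :> R by rewrite (le_trans (lerN10 _) ler01).
by rewrite !mulf_eq0 subr_eq0 addr_eq0 => /orP[/orP[]|] /eqP->;
  rewrite ?lexx ?lerN10 ?ler01 ?le_N11.
Qed.

Definition max_degree_le1 n (arc : rel 'I_n) : Prop :=
  forall y x z, undl arc y x -> undl arc y z -> x = z.

Section Digraph.
Variables (n : nat) (arc : rel 'I_n).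
Hypothesis arc_irr : digraph arc.
Local Notation A := (hermAdj arc).

Lemma undlC : symmetric (undl arc).
Proof. by move=> u v; rewrite /undl orbC. Qed.

Lemma undl_neq u v : undl arc u v -> u != v.
Proof. by apply: contraTneq => ->; rewrite /undl arc_irr. Qed.

Lemma wcomp_sub_closed (S : {set 'I_n}) x :
  closed (undl arc) (mem S) -> x \in S -> wcomp arc x \subset S.
Proof.
move=> S_closed Sx; apply/subsetP => y.
by rewrite inE => /(closed_connect S_closed) <-.
Qed.

Lemma wcomp_isolated x : (forall y, ~~ undl arc x y) -> wcomp arc x = [set x].
Proof.
move=> x_isolated; apply/eqP; rewrite eqEsubset sub1set inE connect0 andbT.
apply: wcomp_sub_closed; last by rewrite set11.
move=> u v uv; rewrite !inE; apply/idP/idP => /eqP E; rewrite E in uv.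
  by rewrite (negbTE (x_isolated v)) in uv.
by rewrite undlC (negbTE (x_isolated u)) in uv.
Qed.

Lemma wcomp_pair x w :
  max_degree_le1 arc -> undl arc x w -> wcomp arc x = [set x; w].
Proof.
move=> deg1 xw; apply/eqP; rewrite eqEsubset; apply/andP; split; last first.
  by apply/subsetP => y /set2P[] ->; rewrite inE ?connect0 ?connect1.
apply: wcomp_sub_closed; last by rewrite set21.
have wx : undl arc w x by rewrite undlC.
move=> u v uv; rewrite !inE.
apply/idP/idP => /orP[]/eqP E; rewrite E in uv *.
- by rewrite (deg1 _ _ _ uv xw) eqxx orbT.
- by rewrite (deg1 _ _ _ uv wx) eqxx.
- by rewrite undlC in uv; rewrite (deg1 _ _ _ uv xw) eqxx orbT.
- by rewrite undlC in uv; rewrite (deg1 _ _ _ uv wx) eqxx.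
Qed.

Lemma pair_arc_or_digon x w :
  undl arc x w -> single_arc arc [set x; w] \/ digon arc [set x; w].
Proof.
move=> xw; have xNw := undl_neq xw.
case Exw: (arc x w); case Ewx: (arc w x).
- by right; exists x, w.
- by left; exists x, w; rewrite Ewx.
- by left; exists w, x; rewrite eq_sym setUC Exw.
- by move: xw; rewrite /undl Exw Ewx.
Qed.

Lemma max_degree_le1_components :
  max_degree_le1 arc -> forall x, isolated_vertex (wcomp arc x) \/
    single_arc arc (wcomp arc x) \/ digon arc (wcomp arc x).
Proof.
move=> deg1 x; case: (pickP (undl arc x)) => [w xw | x_isolated].
  by right; rewrite (wcomp_pair deg1 xw); apply: pair_arc_or_digon.
by left; exists x; apply: wcomp_isolated => y; rewrite x_isolated.
Qed.

Lemma components_max_degree_le1 :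
  (forall x, isolated_vertex (wcomp arc x) \/
    single_arc arc (wcomp arc x) \/ digon arc (wcomp arc x)) ->
  max_degree_le1 arc.
Proof.
move=> comp y x z yx yz.
have [yNx yNz] := (undl_neq yx, undl_neq yz).
have [Cx Cy Cz] : [/\ x \in wcomp arc y, y \in wcomp arc y & z \in wcomp arc y].
  by rewrite !inE connect0 !connect1.
have pair_eq u v : wcomp arc y = [set u; v] -> x = z.
  move=> E; rewrite E !inE in Cx Cy Cz.
  by case/orP: Cy Cx Cz yNx yNz => /eqP-> /orP[]/eqP-> /orP[]/eqP->; rewrite ?eqxx.
case: (comp y) => [[u E] | [[u [v [_ E _ _]]] | [u [v [_ E _ _]]]]]; last 2 first.
- exact: pair_eq E.
- exact: pair_eq E.
by rewrite E !inE in Cx Cy; rewrite (eqP Cx) (eqP Cy) eqxx in yNx.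
Qed.

Lemma hermAdj_eq0 u v : ~~ undl arc u v -> A u v = 0.
Proof. by rewrite /undl mxE negb_or => /andP[/negbTE-> /negbTE->]. Qed.

Lemma hermAdj_mulC u v : A u v * A v u = (undl arc u v)%:R.
Proof.
rewrite !mxE /undl; case: (arc u v); case: (arc v u) => /=;
  by rewrite ?mulr1 ?mul0r ?mulrN ?mulNr ?mulCii ?opprK.
Qed.

Lemma hermAdj_adjoint : A ^t* = A.
Proof.
apply/matrixP => u v; rewrite !mxE.
case: (arc u v); case: (arc v u) => /=.
- by rewrite rmorph1.
- by rewrite rmorphN /= conjCi opprK.
- by rewrite conjCi.
- by rewrite rmorph0.
Qed.

Lemma hermAdj_sqr_diag y : (A *m A) y y = #|[pred x | undl arc y x]|%:R.
Proof.
rewrite mxE -sum1_card natr_sum [RHS]big_mkcond; apply: eq_bigr => x _.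
by rewrite hermAdj_mulC inE; case: undl.
Qed.

Section MaxDegreeOne.
Hypothesis deg1 : max_degree_le1 arc.

Lemma hermAdj_sqr_offdiag u v : u != v -> (A *m A) u v = 0.
Proof.
move=> uNv; rewrite mxE big1 // => w _.
have [uw | /hermAdj_eq0 ->] := boolP (undl arc u w); last by rewrite mul0r.
rewrite [A w v]hermAdj_eq0 ?mulr0 //; apply: contra uNv => wv.
by rewrite undlC in uw; rewrite (deg1 uw wv).
Qed.

Lemma hermAdj_cube : A *m A *m A = A.
Proof.
apply/matrixP => u v; rewrite mxE (bigD1 u) //= big1 => [|w wNu]; last first.
  by rewrite hermAdj_sqr_offdiag ?mul0r // eq_sym.
rewrite addr0 hermAdj_sqr_diag.
have [uv | /hermAdj_eq0 ->] := boolP (undl arc u v); last by rewrite mulr0.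
have /eq_card-> : [pred x | undl arc u x] =i pred1 v.
  by move=> x; rewrite !inE; apply/idP/eqP => [ux | ->]; first exact: deg1 ux uv.
by rewrite card1 mul1r.
Qed.

Lemma spectrum_unit_of_max_degree_le1 a :
  eigenvalue A a -> (-1 <= a) && (a <= 1).
Proof. by move/(eigenvalue_cube_id hermAdj_cube)/cube_id_bounds. Qed.

End MaxDegreeOne.

Lemma max_degree_le1_of_spectrum_sqrt2 :
  (forall a, eigenvalue A a -> (- sqrtC 2%:R < a) && (a < sqrtC 2%:R)) ->
  max_degree_le1 arc.
Proof.
move=> spec y x z yx yz.
have A_normal : A \is normalmx by apply/normalmxP; rewrite hermAdj_adjoint.
have := normalmx_sqr_diag_lt A_normal y
  (fun a Aa => sqr_lt_of_sqrtC_bounds (spec a Aa)).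
by rewrite hermAdj_sqr_diag ltr_nat ltnS => /card_le1_eqP; apply.
Qed.

End Digraph.

Theorem theorem9p2 (n : nat) (arc : rel 'I_n) (Hdig : digraph arc) :
  [/\ ((forall a : algC, eigenvalue (hermAdj arc) a ->
          (- sqrtC 2%:R < a) && (a < sqrtC 2%:R))
       <-> (forall a : algC, eigenvalue (hermAdj arc) a -> (-1 <= a) && (a <= 1))),
      ((forall a : algC, eigenvalue (hermAdj arc) a -> (-1 <= a) && (a <= 1))
       <-> (forall x : 'I_n, isolated_vertex (wcomp arc x) \/
              single_arc arc (wcomp arc x) \/ digon arc (wcomp arc x)))
    & ((forall x : 'I_n, isolated_vertex (wcomp arc x) \/
              single_arc arc (wcomp arc x) \/ digon arc (wcomp arc x))
       <-> (forall a : algC, eigenvalue (hermAdj arc) a ->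
          (- sqrtC 2%:R < a) && (a < sqrtC 2%:R)))].
Proof.
have unit_sqrt2 :
    (forall a : algC, eigenvalue (hermAdj arc) a -> (-1 <= a) && (a <= 1)) ->
    forall a, eigenvalue (hermAdj arc) a -> (- sqrtC 2%:R < a) && (a < sqrtC 2%:R).
  by move=> spec a /spec /unit_interval_sqrtC2.
split; split.
- by move/max_degree_le1_of_spectrum_sqrt2/spectrum_unit_of_max_degree_le1.
- exact: unit_sqrt2.
- by move/unit_sqrt2/max_degree_le1_of_spectrum_sqrt2/(max_degree_le1_components Hdig).
- by move/(components_max_degree_le1 Hdig)/spectrum_unit_of_max_degree_le1.
- by move/(components_max_degree_le1 Hdig)/spectrum_unit_of_max_degree_le1/unit_sqrt2.
- by move/max_degree_le1_of_spectrum_sqrt2/(max_degree_le1_components Hdig).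
Qed.
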